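(* Let $T(n) = (3n+1)/2^{v_2(3n+1)}$ for odd $n \ge 1$. Let $n = 64a + r$ with integer $a \ge 0$ and $r \in \{1,9,17,25,33,41,49,57\}$. Then: (i) if $r \in \{1,17,33,49\}$, then $T(n) \equiv 1 \pmod 4$ (the burst continues, $L \ge 2$); (ii) if $r \in \{9,41\}$, then $T(n) \equiv 3 \pmod 4$ (so $L = 1$), $n \equiv 9 \pmod{32}$, and $T(T(n)) \equiv 3 \pmod 4$ (so $G \ge 2$), for every $a$; (iii) if $r \in \{25,57\}$, then $T(n) \equiv 3 \pmod 4$ (so $L=1$), $n \equiv 25 \pmod{32}$, and $T(T(n)) \equiv 1 \pmod 4$ (so $G = 1$), for every $a$.
   Context: $v_2$ is the $2$-adic valuation. For the orbit $n, T(n), T^2(n),\dots$ with burst indicator $X_t = \mathbf{1}[T^t(n) \equiv 1 \pmod 4]$, $L$ is the length of the burst run starting at $n$ and $G$ the length of the subsequent gap run. *)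

From mathcomp Require Import all_boot.

(* 2-adic valuation v_2(m) (logn 2 m, with the convention logn 2 0 = 0, irrelevant here). *)
Definition v2 (m : nat) : nat := logn 2 m.

Definition T (n : nat) : nat := (3 * n + 1) %/ 2 ^ v2 (3 * n + 1).

From mathcomp Require Import all_boot.
From mathcomp Require Import zify.

(* For n = 1 (mod 8) the number 3n + 1 is 4 times an odd number, so T n = (3n + 1)/4 and
   T n (mod 16) is determined by n (mod 64); for m = 3 (mod 4) the number 3m + 1 is twice an
   odd number, so T m = (3m + 1)/2 and T m (mod 4) is determined by m (mod 8). Chaining the two
   steps decides T n and T (T n) modulo 4 from n modulo 64. *)

Lemma T_eq_odd_part m k e : odd k -> 3 * m + 1 = k * 2 ^ e -> T m = k.
Proof.
move=> odd_k def_m; rewrite /T /v2 def_m logn_Gauss ?coprime2n // pfactorK //.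
by rewrite mulnK // expn_gt0.
Qed.

Lemma T_of_1_mod8 n : n %% 8 = 1 -> 4 * T n = 3 * n + 1.
Proof.
move=> n_mod8.
have def_n : n = 8 * (n %/ 8) + 1 by rewrite [LHS](divn_eq n 8) n_mod8 mulnC.
have -> : T n = 6 * (n %/ 8) + 1.
  by apply: (@T_eq_odd_part _ _ 2); [rewrite oddD oddM | lia].
lia.
Qed.

Lemma T_of_3_mod4 m : m %% 4 = 3 -> 2 * T m = 3 * m + 1.
Proof.
move=> m_mod4.
have def_m : m = 4 * (m %/ 4) + 3 by rewrite [LHS](divn_eq m 4) m_mod4 mulnC.
have -> : T m = 6 * (m %/ 4) + 5.
  by apply: (@T_eq_odd_part _ _ 1); [rewrite oddD oddM | lia].
lia.
Qed.

Theorem proposition5p5 (a r : nat) :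
  r \in [:: 1; 9; 17; 25; 33; 41; 49; 57] ->
  let n := 64 * a + r in
  [/\ (r \in [:: 1; 17; 33; 49] -> T n %% 4 = 1),
      (r \in [:: 9; 41] ->
         [/\ T n %% 4 = 3, n %% 32 = 9 & T (T n) %% 4 = 3])
    & (r \in [:: 25; 57] ->
         [/\ T n %% 4 = 3, n %% 32 = 25 & T (T n) %% 4 = 1])].
Proof.
rewrite !inE => r_res n.
have def_n : n = 64 * a + r by [].
clearbody n.
have /T_of_1_mod8 Tn : n %% 8 = 1 by lia.
have gap_step := @T_of_3_mod4 (T n).
split=> [r_burst | r_gap | r_gap]; first lia.
all: have /gap_step TTn : T n %% 4 = 3 by lia.
all: split; lia.
Qed.
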